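(* Let $R$ be a unital ring and let $S$ be an inverse submonoid with zero of the multiplicative monoid of $R$. Then there is a Boolean inverse submonoid $S''$ of the multiplicative monoid of $R$ such that $S\subseteq S''\subseteq R$.
   Context: A Boolean inverse monoid is an inverse monoid with zero in which every pair of compatible elements ($s^{-1}t$, $st^{-1}$ idempotents) has a join with respect to the natural partial order, multiplication distributes over these joins, and the idempotents form a Boolean algebra (a distributive lattice with bottom in which each principal order ideal is a unital Boolean algebra). *)

From mathcomp Require Import all_boot all_algebra.
Set Implicit Arguments. Unset Strict Implicit. Unset Printing Implicit Defensive.
Import GRing.Theory.
Local Open Scope ring_scope.

Section InverseMonoids.
Variable R : pzRingType.
Variable S : R -> Prop.

Definition idem (e : R) : Prop := e * e = e.

Definition is_inv (s t : R) : Prop := S t /\ s * t * s = s /\ t * s * t = t.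

Definition inv_submonoid0 : Prop :=
  [/\ S 0, S 1,
      (forall a b, S a -> S b -> S (a * b))
    & (forall s, S s -> exists! t, is_inv s t)].

Definition nat_le (s t : R) : Prop := exists e, S e /\ idem e /\ s = e * t.

Definition compatible (s t : R) : Prop :=
  forall s' t', is_inv s s' -> is_inv t t' -> idem (s' * t) /\ idem (s * t').

Definition is_join (a b j : R) : Prop :=
  [/\ S j, nat_le a j, nat_le b j &
      forall u, S u -> nat_le a u -> nat_le b u -> nat_le j u].

Definition idemS (e : R) : Prop := S e /\ idem e.

Definition is_lubE (a b j : R) : Prop :=
  [/\ idemS j, nat_le a j, nat_le b j &
      forall u, idemS u -> nat_le a u -> nat_le b u -> nat_le j u].
Definition is_glbE (a b m : R) : Prop :=
  [/\ idemS m, nat_le m a, nat_le m b &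
      forall u, idemS u -> nat_le u a -> nat_le u b -> nat_le u m].

(* E(S) is a distributive lattice with bottom in which each principal order
   ideal is a unital Boolean algebra (i.e. relatively complemented below e) *)
Definition idem_boolean : Prop :=
  [/\ (forall e f, idemS e -> idemS f -> exists j, is_lubE e f j),
      (forall e f, idemS e -> idemS f -> exists m, is_glbE e f m),
      (forall e f g fg m ef eg, idemS e -> idemS f -> idemS g ->
          is_lubE f g fg -> is_glbE e fg m -> is_glbE e f ef -> is_glbE e g eg ->
          is_lubE ef eg m),
      (exists z, idemS z /\ forall e, idemS e -> nat_le z e)
    & (forall z, idemS z -> (forall e, idemS e -> nat_le z e) ->
       forall e a, idemS e -> idemS a -> nat_le a e ->
         exists b, [/\ idemS b, nat_le b e, is_glbE a b z & is_lubE a b e])].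

Definition boolean_inv_submonoid : Prop :=
  [/\ inv_submonoid0,
      (forall a b, S a -> S b -> compatible a b -> exists j, is_join a b j),
      (forall a b j c, S a -> S b -> S c -> compatible a b -> is_join a b j ->
          is_join (c * a) (c * b) (c * j) /\ is_join (a * c) (b * c) (j * c))
    & idem_boolean].

End InverseMonoids.

From mathcomp Require Import all_boot all_algebra.
Set Implicit Arguments. Unset Strict Implicit. Unset Printing Implicit Defensive.
Import GRing.Theory.
Local Open Scope ring_scope.

(* The idempotents of S commute, so together with 1 - e they generate a
   Boolean algebra B of pairwise commuting idempotents of R.  Take for S'' the
   set of x in R having an inverse y (xyx = x, yxy = y) such that b |-> xby and
   b |-> ybx map B into B.  Then S'' is an inverse monoid containing S whose
   idempotents are exactly B, so E(S'') is Boolean, and compatible a, b with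
   inverses a', b' have the join a + b(1 - a'a): an orthogonal sum of two
   elements of S'', hence again in S''. *)

Section BooleanClosure.
Variables (R : pzRingType) (E : R -> Prop).

Inductive bool_closure : R -> Prop :=
| closure_gen e : E e -> bool_closure e
| closure_mul e f : bool_closure e -> bool_closure f -> bool_closure (e * f)
| closure_compl e : bool_closure e -> bool_closure (1 - e).

Hypothesis E_idem : forall e, E e -> idem e.
Hypothesis E_comm : forall e f, E e -> E f -> e * f = f * e.

Lemma closure_comm_gen x e : bool_closure x -> E e -> x * e = e * x.
Proof.
move=> Bx Ee; elim: Bx => {x}.
- by move=> f Ef; apply: E_comm.
- by move=> f g _ fe _ ge; rewrite -mulrA ge !mulrA fe.
- by move=> f _ fe; rewrite mulrBl mulrBr mul1r mulr1 fe.
Qed.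

Lemma closure_comm x y : bool_closure x -> bool_closure y -> x * y = y * x.
Proof.
move=> Bx; elim=> {y}.
- by move=> f Ef; apply: closure_comm_gen.
- by move=> f g _ xf _ xg; rewrite mulrA xf -!mulrA xg.
- by move=> f _ xf; rewrite mulrBl mulrBr mul1r mulr1 xf.
Qed.

Lemma closure_idem x : bool_closure x -> x * x = x.
Proof.
elim=> {x}.
- exact: E_idem.
- move=> f g Bf ff Bg gg.
  by rewrite -mulrA [g * (f * g)]mulrA -(closure_comm Bf Bg) -mulrA gg mulrA ff.
- by move=> f _ ff; rewrite mulrBl mul1r mulrBr mulr1 ff subrr subr0.
Qed.

End BooleanClosure.

Section Normalizer.
Variables (R : pzRingType) (B : R -> Prop).
Hypothesis B1 : B 1.
Hypothesis B_mul : forall e f, B e -> B f -> B (e * f).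
Hypothesis B_compl : forall e, B e -> B (1 - e).
Hypothesis B_idem : forall e, B e -> e * e = e.
Hypothesis B_comm : forall e f, B e -> B f -> e * f = f * e.

Lemma B0 : B 0.
Proof. by rewrite -(subrr 1); apply: B_compl. Qed.

Lemma B_join e f : B e -> B f -> B (e + f - e * f).
Proof.
move=> Be Bf.
have -> : e + f - e * f = 1 - (1 - e) * (1 - f).
  rewrite mulrBl mul1r !mulrBr !mulr1.
  by rewrite opprB [in RHS]opprB !addrA addrC !addrA addNr add0r addrAC.
by apply/B_compl/B_mul; apply: B_compl.
Qed.

Lemma B_add_orth e f : B e -> B f -> e * f = 0 -> B (e + f).
Proof. by move=> Be Bf ef; rewrite -[e + f]subr0 -ef; apply: B_join. Qed.

Definition normal_pair (x y : R) : Prop :=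
  [/\ x * y * x = x, y * x * y = y,
      forall b, B b -> B (x * b * y) & forall b, B b -> B (y * b * x)].

Definition normalizer (x : R) : Prop := exists y, normal_pair x y.

Lemma normal_pair_sym x y : normal_pair x y -> normal_pair y x.
Proof. by case=> *; split. Qed.

Lemma normal_pair_mulrV x y : normal_pair x y -> B (x * y).
Proof. by case=> _ _ xBy _; rewrite -[x]mulr1; apply: xBy. Qed.

Lemma normal_pair_mulVr x y : normal_pair x y -> B (y * x).
Proof. by move/normal_pair_sym/normal_pair_mulrV. Qed.

Lemma normal_pair_diag b : B b -> normal_pair b b.
Proof.
move=> Bb; have bb := B_idem Bb.
have bBb c : B c -> B (b * c * b).
  by move=> Bc; rewrite -mulrA (B_comm Bc Bb) mulrA bb; apply: B_mul.
by split=> //; rewrite -mulrA bb.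
Qed.

Lemma normal_pair_mul x y u v :
  normal_pair x y -> normal_pair u v -> normal_pair (x * u) (v * y).
Proof.
move=> pxy puv; have Bxy := normal_pair_mulrV pxy; have Byx := normal_pair_mulVr pxy.
have Buv := normal_pair_mulrV puv; have Bvu := normal_pair_mulVr puv.
case: pxy => xyx yxy xBy yBx; case: puv => uvu vuv uBv vBu.
split.
- have -> : x * u * (v * y) * (x * u) = x * ((u * v) * (y * x)) * u by rewrite !mulrA.
  rewrite (B_comm Buv Byx).
  have -> : x * (y * x * (u * v)) * u = (x * y * x) * (u * v * u) by rewrite !mulrA.
  by rewrite xyx uvu.
- have -> : v * y * (x * u) * (v * y) = v * ((y * x) * (u * v)) * y by rewrite !mulrA.
  rewrite (B_comm Byx Buv).
  have -> : v * (u * v * (y * x)) * y = (v * u * v) * (y * x * y) by rewrite !mulrA.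
  by rewrite vuv yxy.
- move=> b Bb; have -> : x * u * b * (v * y) = x * (u * b * v) * y by rewrite !mulrA.
  by apply/xBy/uBv.
- move=> b Bb; have -> : v * y * b * (x * u) = v * (y * b * x) * u by rewrite !mulrA.
  by apply/vBu/yBx.
Qed.

Lemma commuting_inverse_uniq x y z :
  x * y * x = x -> y * x * y = y -> x * z * x = x -> z * x * z = z ->
  B (x * y) -> B (y * x) -> B (x * z) -> B (z * x) -> y = z.
Proof.
move=> xyx yxy xzx zxz Bxy Byx Bxz Bzx.
have yxz_l : y = y * x * z.
  transitivity (y * (x * z * x) * y); first by rewrite xzx yxy.
  transitivity (y * ((x * z) * (x * y))); first by rewrite !mulrA.
  by rewrite (B_comm Bxz Bxy) !mulrA yxy.
have yxz_r : y * x * z = z.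
  transitivity ((y * x) * ((z * x) * z)); first by rewrite zxz.
  transitivity (((y * x) * (z * x)) * z); first by rewrite !mulrA.
  rewrite (B_comm Byx Bzx).
  transitivity (z * (x * y * x) * z); first by rewrite !mulrA.
  by rewrite xyx.
by rewrite yxz_l yxz_r.
Qed.

Lemma normal_pair_uniq x y z : normal_pair x y -> normal_pair x z -> y = z.
Proof.
move=> pxy pxz; case: (pxy) => xyx yxy _ _; case: (pxz) => xzx zxz _ _.
apply: (commuting_inverse_uniq xyx yxy xzx zxz).
- exact: normal_pair_mulrV pxy.
- exact: normal_pair_mulVr pxy.
- exact: normal_pair_mulrV pxz.
- exact: normal_pair_mulVr pxz.
Qed.

Lemma normal_pair_idem x y : normal_pair x y -> x * x = x -> B x.
Proof.
move=> pxy xx; have Bxy := normal_pair_mulrV pxy; have Byx := normal_pair_mulVr pxy.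
case: pxy => xyx yxy _ _.
have By : B y.
  rewrite -yxy -{1}xx.
  have -> : y * (x * x) * y = (y * x) * (x * y) by rewrite !mulrA.
  exact: B_mul.
rewrite -xyx -(B_idem By).
have -> : x * (y * y) * x = (x * y) * (y * x) by rewrite !mulrA.
exact: B_mul.
Qed.

(* x = x (yx) and yx commutes with b *)
Lemma normal_pair_mul_B_eq0 x y v b :
  normal_pair x y -> B b -> x * v = 0 -> x * b * v = 0.
Proof.
move=> pxy Bb xv; have Byx := normal_pair_mulVr pxy; case: pxy => xyx _ _ _.
rewrite -xyx -(mulrA x y x) -(mulrA x (y * x) b) (B_comm Byx Bb).
by rewrite !mulrA -mulrA xv mulr0.
Qed.

Lemma normal_pair_add x y u v : normal_pair x y -> normal_pair u v ->
  y * u = 0 -> x * v = 0 -> v * x = 0 -> u * y = 0 -> normal_pair (x + u) (y + v).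
Proof.
move=> pxy puv yu xv vx uy.
have pyx := normal_pair_sym pxy; have pvu := normal_pair_sym puv.
case: (pxy) => xyx yxy xBy yBx; case: (puv) => uvu vuv uBv vBu.
have xyu : x * y * u = 0 by rewrite -mulrA yu mulr0.
have uvx : u * v * x = 0 by rewrite -mulrA vx mulr0.
have yxv : y * x * v = 0 by rewrite -mulrA xv mulr0.
have vuy : v * u * y = 0 by rewrite -mulrA uy mulr0.
split.
- by rewrite !mulrDl !mulrDr xv uy !addr0 !add0r xyu uvx !addr0 !add0r xyx uvu.
- by rewrite !mulrDl !mulrDr yu vx !addr0 !add0r yxv vuy !addr0 !add0r yxy vuv.
- move=> b Bb.
  rewrite !mulrDl !mulrDr (normal_pair_mul_B_eq0 pxy Bb xv).
  rewrite (normal_pair_mul_B_eq0 puv Bb uy) addr0 add0r.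
  apply: B_add_orth; [exact: xBy | exact: uBv |].
  by rewrite !mulrA -[x * b * y * u]mulrA yu mulr0 !mul0r.
- move=> b Bb.
  rewrite !mulrDl !mulrDr (normal_pair_mul_B_eq0 pyx Bb yu).
  rewrite (normal_pair_mul_B_eq0 pvu Bb vx) addr0 add0r.
  apply: B_add_orth; [exact: yBx | exact: vBu |].
  by rewrite !mulrA -[y * b * x * v]mulrA xv mulr0 !mul0r.
Qed.

Lemma normalizer_B b : B b -> normalizer b.
Proof. by move=> Bb; exists b; apply: normal_pair_diag. Qed.

Lemma normalizer_mul x u : normalizer x -> normalizer u -> normalizer (x * u).
Proof. by move=> [y pxy] [v puv]; exists (v * y); apply: normal_pair_mul. Qed.

Lemma normalizer_idem e : normalizer e -> idem e -> B e.
Proof. by move=> [f pef] ee; apply: normal_pair_idem pef ee. Qed.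

Lemma normal_pair_is_inv x y : normal_pair x y -> is_inv normalizer x y.
Proof. by move=> pxy; case: (pxy) => xyx yxy _ _; split=> //; exists x; apply: normal_pair_sym. Qed.

Lemma is_inv_normalizer_uniq x y z : normalizer x ->
  is_inv normalizer x y -> is_inv normalizer x z -> y = z.
Proof.
move=> Nx [Ny [xyx yxy]] [Nz [xzx zxz]].
have idemB u w : normalizer u -> normalizer w -> u * w * u = u -> B (u * w) /\ B (w * u).
  move=> Nu Nw uwu; split; apply: normalizer_idem; try exact: normalizer_mul.
    by rewrite /idem mulrA uwu.
  by rewrite /idem -mulrA (mulrA u w u) uwu.
have [Bxy Byx] := idemB _ _ Nx Ny xyx; have [Bxz Bzx] := idemB _ _ Nx Nz xzx.
exact: (commuting_inverse_uniq xyx yxy xzx zxz).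
Qed.

Lemma normalizer_inv_submonoid0 : inv_submonoid0 normalizer.
Proof.
split.
- exact: normalizer_B B0.
- exact: normalizer_B B1.
- exact: normalizer_mul.
- move=> x Nx; case: (Nx) => y pxy; exists y; split; first exact: normal_pair_is_inv.
  by move=> z; apply: is_inv_normalizer_uniq (normal_pair_is_inv pxy).
Qed.

Lemma nat_le_normalizerP x u : nat_le normalizer x u <-> exists2 e, B e & x = e * u.
Proof.
split; first by case=> e [Ne [ee ->]]; exists e => //; apply: normalizer_idem.
by case=> e Be ->; exists e; split; [apply: normalizer_B | split=> //; apply: B_idem].
Qed.

Lemma nat_le_antisym x u : nat_le normalizer x u -> nat_le normalizer u x -> x = u.
Proof.
move=> /nat_le_normalizerP [e Be ->] /nat_le_normalizerP [f Bf fu].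
have efu : u = e * f * u by rewrite {1}fu mulrA (B_comm Bf Be).
by rewrite {1}efu !mulrA (B_idem Be) -efu.
Qed.

Lemma nat_le_dom x x' u : normal_pair x x' -> nat_le normalizer x u -> x * x' * u = x.
Proof.
move=> pxx' /nat_le_normalizerP [e Be xu].
have Bxx' := normal_pair_mulrV pxx'; case: pxx' => xx'x _ _ _.
have ex : e * x = x by rewrite xu mulrA (B_idem Be).
have -> : x * x' = x * x' * e by rewrite (B_comm Bxx' Be) mulrA ex.
by rewrite -mulrA -xu xx'x.
Qed.

Section CompatibleJoin.
Variables a a' b b' : R.
Hypotheses (pa : normal_pair a a') (pb : normal_pair b b').
Hypotheses (ip : idem (a' * b)) (iq : idem (a * b')).

Lemma compat_B_l : B (a' * b).
Proof. exact: normal_pair_idem (normal_pair_mul (normal_pair_sym pa) pb) ip. Qed.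

Lemma compat_B_r : B (a * b').
Proof. exact: normal_pair_idem (normal_pair_mul pa (normal_pair_sym pb)) iq. Qed.

Lemma compat_swap_l : b' * a = a' * b.
Proof.
apply: (normal_pair_uniq (normal_pair_mul (normal_pair_sym pa) pb)).
exact: normal_pair_diag compat_B_l.
Qed.

Lemma compat_swap_r : b * a' = a * b'.
Proof.
apply: (normal_pair_uniq (normal_pair_mul pa (normal_pair_sym pb))).
exact: normal_pair_diag compat_B_r.
Qed.

Lemma compat_annih : a' * b * (1 - a' * a) = 0.
Proof.
case: pa => _ a'aa' _ _.
by rewrite mulrBr mulr1 (B_comm compat_B_l (normal_pair_mulVr pa)) !mulrA a'aa' subrr.
Qed.

Lemma compat_cross_l : a * a' * b = b * a' * a.
Proof. by rewrite -mulrA -compat_swap_l mulrA -compat_swap_r. Qed.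

Lemma compat_cross_r : b * b' * a = b * (a' * a).
Proof.
have Bb'b := normal_pair_mulVr pb; have Ba'a := normal_pair_mulVr pa.
case: pa => aa'a _ _ _.
rewrite -mulrA compat_swap_l mulrA compat_swap_r -{1}aa'a.
have -> : a * a' * a * b' * b = a * ((a' * a) * (b' * b)) by rewrite !mulrA.
rewrite (B_comm Ba'a Bb'b).
have -> : a * ((b' * b) * (a' * a)) = (a * b') * (b * a') * a by rewrite !mulrA.
by rewrite compat_swap_r iq -compat_swap_r -!mulrA.
Qed.

Lemma normal_pair_join :
  normal_pair (a + b * (1 - a' * a)) (a' + (1 - a' * a) * b').
Proof.
have Bc : B (1 - a' * a) by apply/B_compl/(normal_pair_mulVr pa).
case: (pa) => aa'a a'aa' _ _.
apply: normal_pair_add => //.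
- by apply: normal_pair_mul => //; apply: normal_pair_diag.
- by rewrite mulrA compat_annih.
- by rewrite mulrA mulrBr mulr1 mulrA aa'a subrr mul0r.
- by rewrite -mulrA compat_swap_l (B_comm Bc compat_B_l) compat_annih.
- by rewrite -mulrA mulrBl mul1r a'aa' subrr mulr0.
Qed.

Lemma join_formula : is_join normalizer a b (a + b * (1 - a' * a)).
Proof.
have Baa' := normal_pair_mulrV pa; have Bbb' := normal_pair_mulrV pb.
case: (pa) => aa'a _ _ _; case: (pb) => bb'b _ _ _.
split.
- by exists (a' + (1 - a' * a) * b'); apply: normal_pair_join.
- apply/nat_le_normalizerP; exists (a * a') => //.
  by rewrite mulrDr aa'a !mulrA -(mulrA a a' b) -(mulrA a) compat_annih mulr0 addr0.
- apply/nat_le_normalizerP; exists (b * b') => //.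
  by rewrite mulrDr compat_cross_r (mulrA _ b) bb'b -mulrDr addrC subrK mulr1.
- move=> u _ au bu; apply/nat_le_normalizerP.
  exists (a * a' + b * b' - a * a' * (b * b')); first exact: B_join.
  rewrite mulrBl !mulrDl (nat_le_dom pa au) (nat_le_dom pb bu).
  rewrite -(mulrA (a * a') (b * b')) (nat_le_dom pb bu).
  by rewrite compat_cross_l mulrBr mulr1 addrA mulrA.
Qed.

End CompatibleJoin.

Section Distributivity.
Variables a a' b b' c d : R.
Hypotheses (pa : normal_pair a a') (pb : normal_pair b b') (pc : normal_pair c d).
Hypotheses (ip : idem (a' * b)) (iq : idem (a * b')).

Lemma join_mull : is_join normalizer (c * a) (c * b) (c * (a + b * (1 - a' * a))).
Proof.
have Bdc := normal_pair_mulVr pc; have Bbb' := normal_pair_mulrV pb.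
case: (pc) => cdc _ cBd _; case: (pb) => bb'b _ _ b'Bb.
have ip' : idem (a' * d * (c * b)).
  have -> : a' * d * (c * b) = (a' * b) * (b' * (d * c) * b).
    transitivity (a' * ((d * c) * (b * b' * b))); first by rewrite bb'b !mulrA.
    transitivity (a' * ((d * c) * (b * b')) * b); first by rewrite !mulrA.
    by rewrite (B_comm Bdc Bbb') !mulrA.
  exact: B_idem (B_mul (compat_B_l pa pb ip) (b'Bb _ Bdc)).
have iq' : idem (c * a * (b' * d)).
  have -> : c * a * (b' * d) = c * (a * b') * d by rewrite !mulrA.
  exact: B_idem (cBd _ (compat_B_r pa pb iq)).
suff -> : c * (a + b * (1 - a' * a)) = c * a + c * b * (1 - a' * d * (c * a)).
  exact: join_formula (normal_pair_mul pc pa) (normal_pair_mul pc pb) ip' iq'.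
rewrite mulrDr mulrA; congr (_ + _); rewrite !mulrBr !mulr1; congr (_ - _).
symmetry; transitivity (c * ((b * a') * (d * c)) * a); first by rewrite !mulrA.
rewrite (compat_swap_r pa pb iq) -(B_comm Bdc (compat_B_r pa pb iq)).
rewrite -(compat_swap_r pa pb iq).
transitivity ((c * d * c) * b * a' * a); first by rewrite !mulrA.
by rewrite cdc !mulrA.
Qed.

Lemma join_mulr : is_join normalizer (a * c) (b * c) ((a + b * (1 - a' * a)) * c).
Proof.
have Bcd := normal_pair_mulrV pc; have Ba'a := normal_pair_mulVr pa.
case: (pc) => cdc _ _ dBc; case: (pa) => aa'a _ aBa' _.
have ip' : idem (d * a' * (b * c)).
  have -> : d * a' * (b * c) = d * (a' * b) * c by rewrite !mulrA.
  exact: B_idem (dBc _ (compat_B_l pa pb ip)).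
have iq' : idem (a * c * (d * b')).
  have -> : a * c * (d * b') = (a * (c * d) * a') * (a * b').
    transitivity (a * a' * a * (c * d) * b'); first by rewrite aa'a !mulrA.
    transitivity (a * ((a' * a) * (c * d)) * b'); first by rewrite !mulrA.
    by rewrite (B_comm Ba'a Bcd) !mulrA.
  exact: B_idem (B_mul (aBa' _ Bcd) (compat_B_r pa pb iq)).
suff -> : (a + b * (1 - a' * a)) * c = a * c + b * c * (1 - d * a' * (a * c)).
  exact: join_formula (normal_pair_mul pa pc) (normal_pair_mul pb pc) ip' iq'.
rewrite mulrDl; congr (_ + _); rewrite !mulrBr !mulrBl !mulr1; congr (_ - _).
symmetry; transitivity (b * ((c * d) * (a' * a)) * c); first by rewrite !mulrA.
rewrite (B_comm Bcd Ba'a).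
transitivity (b * a' * a * (c * d * c)); first by rewrite !mulrA.
by rewrite cdc !mulrA.
Qed.

End Distributivity.

Lemma join_uniq x u j1 j2 :
  is_join normalizer x u j1 -> is_join normalizer x u j2 -> j1 = j2.
Proof. by move=> [N1 x1 u1 l1] [N2 x2 u2 l2]; apply: nat_le_antisym; [apply: l1 | apply: l2]. Qed.

Lemma compatible_normal_pairs x u : normalizer x -> normalizer u ->
  compatible normalizer x u ->
  exists x' u', [/\ normal_pair x x', normal_pair u u', idem (x' * u) & idem (x * u')].
Proof.
move=> [x' px] [u' pu] /(_ x' u' (normal_pair_is_inv px) (normal_pair_is_inv pu)) [ip iq].
by exists x', u'.
Qed.

Lemma normalizer_join_exists x u : normalizer x -> normalizer u ->
  compatible normalizer x u -> exists j, is_join normalizer x u j.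
Proof.
move=> Nx Nu /(compatible_normal_pairs Nx Nu) [x' [u' [px pu ip iq]]].
by eexists; apply: join_formula px pu ip iq.
Qed.

Lemma normalizer_join_distr x u j c : normalizer x -> normalizer u -> normalizer c ->
  compatible normalizer x u -> is_join normalizer x u j ->
  is_join normalizer (c * x) (c * u) (c * j) /\ is_join normalizer (x * c) (u * c) (j * c).
Proof.
move=> Nx Nu [d pc] /(compatible_normal_pairs Nx Nu) [x' [u' [px pu ip iq]]] J.
rewrite (join_uniq J (join_formula px pu ip iq)).
by split; [apply: join_mull px pu pc ip iq | apply: join_mulr px pu pc ip iq].
Qed.

Lemma idemS_normalizerP e : idemS normalizer e <-> B e.
Proof.
split; first by case; apply: normalizer_idem.
by move=> Be; split; [apply: normalizer_B | apply: B_idem].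
Qed.

Lemma nat_le_idemP e f : B e -> B f -> nat_le normalizer e f <-> e = e * f.
Proof.
move=> Be Bf; split; last by move=> efe; apply/nat_le_normalizerP; exists e.
by case/nat_le_normalizerP=> g _ ->; rewrite -mulrA (B_idem Bf).
Qed.

Lemma lubE_formula e f : B e -> B f -> is_lubE normalizer e f (e + f - e * f).
Proof.
move=> Be Bf; have Bj := B_join Be Bf.
have ee := B_idem Be; have ff := B_idem Bf; have ef := B_comm Be Bf.
split; first exact/idemS_normalizerP.
- by apply/nat_le_idemP => //; rewrite mulrBr mulrDr ee mulrA ee addrK.
- apply/nat_le_idemP => //.
  by rewrite mulrBr mulrDr ff mulrA -ef -mulrA ff ef addrAC subrr add0r.
- move=> u /idemS_normalizerP Bu /nat_le_idemP-/(_ Be Bu) eu.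
  move=> /nat_le_idemP-/(_ Bf Bu) fu; apply/nat_le_idemP => //.
  by rewrite mulrBl mulrDl -eu -fu -mulrA -fu.
Qed.

Lemma glbE_formula e f : B e -> B f -> is_glbE normalizer e f (e * f).
Proof.
move=> Be Bf; have Bm := B_mul Be Bf.
have ee := B_idem Be; have ff := B_idem Bf; have ef := B_comm Be Bf.
split; first exact/idemS_normalizerP.
- by apply/nat_le_idemP => //; rewrite -mulrA -ef mulrA ee.
- by apply/nat_le_idemP => //; rewrite -mulrA ff.
- move=> u /idemS_normalizerP Bu /nat_le_idemP-/(_ Bu Be) ue.
  by move=> /nat_le_idemP-/(_ Bu Bf) uf; apply/nat_le_idemP => //; rewrite mulrA -ue.
Qed.

Lemma lubE_uniq e f j1 j2 :
  is_lubE normalizer e f j1 -> is_lubE normalizer e f j2 -> j1 = j2.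
Proof. by move=> [I1 e1 f1 l1] [I2 e2 f2 l2]; apply: nat_le_antisym; [apply: l1 | apply: l2]. Qed.

Lemma glbE_uniq e f m1 m2 :
  is_glbE normalizer e f m1 -> is_glbE normalizer e f m2 -> m1 = m2.
Proof. by move=> [I1 e1 f1 l1] [I2 e2 f2 l2]; apply: nat_le_antisym; [apply: l2 | apply: l1]. Qed.

Lemma relative_compl e a : B e -> B a -> a = a * e ->
  [/\ idemS normalizer (e * (1 - a)), nat_le normalizer (e * (1 - a)) e,
      is_glbE normalizer a (e * (1 - a)) 0 & is_lubE normalizer a (e * (1 - a)) e].
Proof.
move=> Be Ba ae; have Bb : B (e * (1 - a)) by apply/B_mul/B_compl.
have ab : a * (e * (1 - a)) = 0 by rewrite mulrA -ae mulrBr mulr1 (B_idem Ba) subrr.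
split; first exact/idemS_normalizerP.
- apply/nat_le_idemP => //.
  by rewrite -mulrA (B_comm (B_compl Ba) Be) mulrA (B_idem Be).
- by rewrite -ab; apply: glbE_formula.
- have := lubE_formula Ba Bb.
  by rewrite ab subr0 mulrBr mulr1 -(B_comm Ba Be) -ae [a + (e - a)]addrC subrK.
Qed.

Lemma normalizer_idem_boolean : idem_boolean normalizer.
Proof.
split.
- by move=> e f /idemS_normalizerP Be /idemS_normalizerP Bf; eexists; apply: lubE_formula.
- by move=> e f /idemS_normalizerP Be /idemS_normalizerP Bf; eexists; apply: glbE_formula.
- move=> e f g fg m ef eg /idemS_normalizerP Be /idemS_normalizerP Bf /idemS_normalizerP Bg.
  move=> /lubE_uniq-/(_ _ (lubE_formula Bf Bg)) -> /glbE_uniq m_eq.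
  move=> /glbE_uniq-/(_ _ (glbE_formula Be Bf)) -> /glbE_uniq-/(_ _ (glbE_formula Be Bg)) ->.
  rewrite (m_eq _ (glbE_formula Be (B_join Bf Bg))).
  have -> : e * (f + g - f * g) = e * f + e * g - e * f * (e * g).
    rewrite mulrBr mulrDr; congr (_ - _).
    have -> : e * f * (e * g) = e * (f * e) * g by rewrite !mulrA.
    by rewrite -(B_comm Be Bf) !mulrA (B_idem Be).
  by apply: lubE_formula; apply: B_mul.
- exists 0; split; first exact/idemS_normalizerP/B0.
  by move=> e /idemS_normalizerP Be; apply/nat_le_idemP => //; [apply: B0 | rewrite mul0r].
- move=> z /idemS_normalizerP Bz z_bot e a /idemS_normalizerP Be /idemS_normalizerP Ba.
  move=> /nat_le_idemP-/(_ Ba Be) ae.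
  have -> : z = 0.
    by have /nat_le_idemP-/(_ Bz B0) -> := z_bot _ ((idemS_normalizerP 0).2 B0); rewrite mulr0.
  by exists (e * (1 - a)); apply: relative_compl.
Qed.

Lemma normalizer_boolean : boolean_inv_submonoid normalizer.
Proof.
split.
- exact: normalizer_inv_submonoid0.
- exact: normalizer_join_exists.
- by move=> x u j c Nx Nu Nc; apply: normalizer_join_distr.
- exact: normalizer_idem_boolean.
Qed.

End Normalizer.

Section InverseSubmonoid.
Variables (R : pzRingType) (S : R -> Prop).
Hypothesis HS : inv_submonoid0 S.

Lemma inv_submonoid_mul a b : S a -> S b -> S (a * b).
Proof. by case: HS => _ _ + _; apply. Qed.

Lemma inv_submonoid_inv s : S s -> exists t, is_inv S s t.
Proof. by case: HS => _ _ _ /[apply] -[t [st _]]; exists t. Qed.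

Lemma inv_submonoid_inv_uniq s t1 t2 : S s -> is_inv S s t1 -> is_inv S s t2 -> t1 = t2.
Proof. by case: HS => _ _ _ /[apply] -[t [_ uniq]] /uniq <- /uniq. Qed.

(* the inverse x of ef satisfies x = f x e, hence is idempotent, hence self-inverse *)
Lemma idemS_mul e f : idemS S e -> idemS S f -> idem (e * f).
Proof.
move=> [Se ee] [Sf ff]; have Sef := inv_submonoid_mul Se Sf.
have [x [Sx [efxef xefx]]] := inv_submonoid_inv Sef.
have fxe : x = f * x * e.
  apply: (inv_submonoid_inv_uniq Sef); first by split.
  split; first exact: inv_submonoid_mul (inv_submonoid_mul Sf Sx) Se.
  split.
    have -> : e * f * (f * x * e) * (e * f) = e * (f * f) * x * (e * e) * f by rewrite !mulrA.
    by rewrite ee ff -[RHS]efxef !mulrA.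
  have -> : f * x * e * (e * f) * (f * x * e) = f * (x * (e * e) * (f * f) * x) * e.
    by rewrite !mulrA.
  by rewrite ee ff -[x * e * f]mulrA xefx.
have xx : x * x = x.
  rewrite {1 2}fxe; have -> : f * x * e * (f * x * e) = f * (x * (e * f) * x) * e by rewrite !mulrA.
  by rewrite xefx -fxe.
suff -> : e * f = x by [].
apply: (inv_submonoid_inv_uniq Sx); first by split.
by split=> //; rewrite !xx.
Qed.

Lemma idemS_comm e f : idemS S e -> idemS S f -> e * f = f * e.
Proof.
move=> Ie If; have efef := idemS_mul Ie If; have fefe := idemS_mul If Ie.
case: Ie If => Se ee [Sf ff]; have Sef := inv_submonoid_mul Se Sf.
apply: (inv_submonoid_inv_uniq Sef).
- by split=> //; rewrite !efef.
- split; first exact: inv_submonoid_mul.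
  have -> : e * f * (f * e) * (e * f) = e * (f * f) * (e * e) * f by rewrite !mulrA.
  have -> : f * e * (e * f) * (f * e) = f * (e * e) * (f * f) * e by rewrite !mulrA.
  by rewrite ee ff -mulrA efef -mulrA fefe.
Qed.

Lemma closure_idemS_idem x : bool_closure (idemS S) x -> x * x = x.
Proof. exact: (closure_idem (fun e (Ie : idemS S e) => proj2 Ie) idemS_comm). Qed.

Lemma closure_idemS_comm x y :
  bool_closure (idemS S) x -> bool_closure (idemS S) y -> x * y = y * x.
Proof. exact: (closure_comm idemS_comm). Qed.

Lemma closure_idemS_conj s t b : S s -> is_inv S s t ->
  bool_closure (idemS S) b -> bool_closure (idemS S) (s * b * t).
Proof.
move=> Ss [St [sts tst]].
have Its : idemS S (t * s) by split; [apply: inv_submonoid_mul | rewrite /idem mulrA tst].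
have Bts := closure_gen Its.
elim=> {b}.
- move=> e Ie; apply: closure_gen; split.
    by case: Ie => Se _; apply: inv_submonoid_mul (inv_submonoid_mul Ss Se) St.
  rewrite /idem.
  have -> : s * e * t * (s * e * t) = s * (e * (t * s)) * e * t by rewrite !mulrA.
  rewrite (closure_idemS_comm (closure_gen Ie) Bts).
  have -> : s * (t * s * e) * e * t = (s * t * s) * (e * e) * t by rewrite !mulrA.
  by rewrite sts (closure_idemS_idem (closure_gen Ie)).
- move=> e f Be sets Bf sfts.
  have -> : s * (e * f) * t = (s * e * t) * (s * f * t).
    have -> : s * e * t * (s * f * t) = s * (e * (t * s)) * f * t by rewrite !mulrA.
    by rewrite (closure_idemS_comm Be Bts) !mulrA sts.
  exact: closure_mul.
- move=> e Be sets.
  have -> : s * (1 - e) * t = (s * t) * (1 - s * e * t).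
    by rewrite mulrBr mulrBl mulrBr !mulr1 !mulrA sts.
  apply: closure_mul; last exact: closure_compl.
  by apply: closure_gen; split; [apply: inv_submonoid_mul | rewrite /idem mulrA sts].
Qed.

Lemma inv_submonoid_sub_normalizer s : S s -> normalizer (bool_closure (idemS S)) s.
Proof.
move=> Ss; have [t Ist] := inv_submonoid_inv Ss; exists t.
have [St [sts tst]] := Ist; have Its : is_inv S t s by [].
by split=> // b; [apply: closure_idemS_conj Ist | apply: closure_idemS_conj Its].
Qed.

End InverseSubmonoid.

Unset Implicit Arguments.

Theorem proposition3p2 (R : pzRingType) (S : R -> Prop) :
  inv_submonoid0 S ->
  exists S'' : R -> Prop, boolean_inv_submonoid S'' /\ (forall x, S x -> S'' x).
Proof.
move=> HS; exists (normalizer (bool_closure (idemS S))); split.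
- apply: normalizer_boolean.
  + by apply: closure_gen; split; [case: HS | rewrite /idem mulr1].
  + exact: closure_mul.
  + exact: closure_compl.
  + exact: closure_idemS_idem.
  + exact: closure_idemS_comm.
- exact: inv_submonoid_sub_normalizer.
Qed.
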